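(* Let $H_1,\dots,H_n$ be two-terminal signed graphs, $H_i=H_i(x_{i-1},x_i)$, and let $G=\mathcal S(H_1,\dots,H_n)$ where $n=|\mathcal B(G)|$ (i.e. $H_1,\dots,H_n$ are exactly the parts of $G$) and $|\mathcal B_2(G)|\ge 1$. Let $\theta^*=(1,1,-1,-1)$ if $|\mathcal B_2(G)|=1$, and let $\theta^*\in\{(1,1,-1,-1),(-1,-1,-1,-1)\}$ be arbitrary if $|\mathcal B_2(G)|\ge 2$. Suppose every $H_i\in\mathcal B_2(G)$ has a $\Psi_{x_{i-1}x_i}(2)$-cover. Then $G$ has a signed subgraph $6$-cover of the form $$\mathcal F_0\cup 2\mathcal B_0(G)\cup\{P_1,P_2,P_3,P_4\}\cup\{T_1,T_2,T_3,T_4\},$$ where $\mathcal F_0$ is a family of signed circuits; $2\mathcal B_0(G)$ denotes the family containing each member of $\mathcal B_0(G)$ twice; $P_1,\dots,P_4$ are $x_0x_n$-paths of $G$ with $(\sigma(P_1),\sigma(P_2),\sigma(P_3),\sigma(P_4))=\theta^*$; $T_1,T_2$ are tadpoles of $G$ at $x_0$ whose unbalanced circuit lies in the part of $\mathcal B_0(G)\cup\mathcal B_2(G)$ with minimum subscript; and $T_3,T_4$ are tadpoles of $G$ at $x_n$ whose unbalanced circuit lies in the part of $\mathcal B_0(G)\cup\mathcal B_2(G)$ with maximum subscript.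
   Context: Signed graph: a finite graph (multiple edges and loops allowed) with signature $\sigma:E\to\{1,-1\}$. For a subgraph or edge set $S$, $\sigma(S)=\prod_{e\in S}\sigma(e)$; a path $P$ is positive if $\sigma(P)=1$ and negative otherwise; an $xy$-path is a path with ends $x,y$. A circuit is a connected $2$-regular subgraph; it is balanced if it has an even number of negative edges, unbalanced otherwise. A barbell is the union of two unbalanced circuits $C_1,C_2$ and a path $P$ such that either $P$ is trivial and $C_1,C_2$ share exactly one vertex, or $C_1,C_2$ are vertex-disjoint and $P$ joins them meeting $C_1\cup C_2$ only at its ends. A signed circuit is a balanced circuit or a barbell. A tadpole at $x$ is the union of an $xy$-path $P$ (possibly trivial) and an unbalanced circuit $C$ with $V(P)\cap V(C)=\{y\}$. A signed subgraph $6$-cover of $G$ is a family (multiset) of subgraphs of $G$ such that every edge of $G$ lies in exactly $6$ members. For distinct vertices $x,y$ and an integer $t\in[0,3]$, a $\Psi_{xy}(t)$-cover of $G$ is a signed subgraph $6$-cover of $G$ consisting of exactly $t$ positive $xy$-paths, $t$ negative $xy$-paths, $t$ tadpoles at $x$, $6-2t$ tadpoles at $y$, and some signed circuits. A two-terminal signed graph $H(x,y)$ is a connected nonempty signed graph $H$ with a source terminal $x$ and a target terminal $y$, where $x=y$ if and only if $H$ is a single negative loop. For two-terminal signed graphs $H_i=H_i(x_i,y_i)$ ($i\in[1,n]$, pairwise disjoint), the series connection $\mathcal S(H_1,\dots,H_n)$ is the two-terminal signed graph with source $x_1$ and target $y_n$ obtained from $H_1\cup\dots\cup H_n$ by identifying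 $y_{i-1}$ with $x_i$ for each $i\in[2,n]$. If $G=\mathcal S(H_1,\dots,H_n)$ with $n$ maximum, each $H_i$ is called a part of $G$ and $\mathcal B(G)$ is the set of parts. $\mathcal B_0(G)$ is the set of parts whose two terminals coincide (these are negative loops), $\mathcal B_1(G)$ the set of parts with distinct terminals and exactly one edge, and $\mathcal B_2(G)$ the set of parts with distinct terminals and at least two edges. *)

(* A signed graph is given by a finite vertex type V, a finite
   edge type E (multiple edges allowed), two endpoint maps e1 e2 : E -> V
   (a loop is an edge e with e1 e = e2 e) and neg : E -> bool, where
   neg e = true means sigma(e) = -1.  Subgraphs are represented by their edge
   sets (their vertex set being the set of ends of their edges); paths also
   carry their vertex set explicitly. *)
From mathcomp Require Import all_boot.
Set Implicit Arguments.
Unset Strict Implicit.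
Unset Printing Implicit Defensive.

Section SignedGraphs.
Variables (V E : finType) (e1 e2 : E -> V) (neg : E -> bool).

Definition joins (e : E) (u v : V) : bool :=
  ((e1 e == u) && (e2 e == v)) || ((e1 e == v) && (e2 e == u)).

Definition vset (F : {set E}) : {set V} :=
  [set v | [exists e in F, (e1 e == v) || (e2 e == v)]].

(* degree of v in F (a loop counts twice) *)
Definition deg (F : {set E}) (v : V) : nat :=
  \sum_(e in F) ((e1 e == v) + (e2 e == v)).

(* sgn F = true  iff  sigma(F) = -1 *)
Definition sgn (F : {set E}) : bool := odd #|[set e in F | neg e]|.

(* W, F are the vertex and edge sets of an xy-path (possibly trivial):
   vertices x = v_0, v_1, ..., v_k = y pairwise distinct, edges f_1..f_k
   pairwise distinct, f_i joining v_{i-1} and v_i. *)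
Definition xypath (x y : V) (W : {set V}) (F : {set E}) : Prop :=
  exists (vs : seq V) (es : seq E),
    [/\ size es = size vs, uniq (x :: vs), uniq es,
        all (fun p => joins p.1 p.2.1 p.2.2) (zip es (zip (x :: vs) vs))
      & last x vs = y] /\ W = [set v in x :: vs] /\ F = [set e in es].

Definition connectedE (F : {set E}) : Prop :=
  forall u v, u \in vset F -> v \in vset F ->
    exists W P, xypath u v W P /\ P \subset F.

Definition circuit (C : {set E}) : Prop :=
  [/\ C != set0, connectedE C & forall v, v \in vset C -> deg C v = 2].

Definition unbalanced_circuit (C : {set E}) : Prop := circuit C /\ sgn C.
Definition balanced_circuit (C : {set E}) : Prop := circuit C /\ ~~ sgn C.

Definition barbell (B : {set E}) : Prop :=
  exists C1 C2, [/\ unbalanced_circuit C1, unbalanced_circuit C2 &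
    ( [/\ [disjoint C1 & C2], #|vset C1 :&: vset C2| = 1 & B = C1 :|: C2]
    \/ exists x y W P,
         [/\ [disjoint vset C1 & vset C2], x \in vset C1, y \in vset C2,
             xypath x y W P & W :&: (vset C1 :|: vset C2) = [set x; y]]
         /\ B = C1 :|: P :|: C2 )].

Definition signed_circuit (F : {set E}) : Prop :=
  balanced_circuit F \/ barbell F.

Definition tadpole (x : V) (T C : {set E}) : Prop :=
  unbalanced_circuit C /\
  exists y W P, [/\ xypath x y W P, W :&: vset C = [set y] & T = P :|: C].

Definition has_psi_cover (D : {set E}) (x y : V) (t : nat) : Prop :=
  exists Pp Pn Tx Ty Cs : seq {set E},
    [/\ size Pp = t, size Pn = t, size Tx = t & size Ty = 6 - 2 * t] /\
    [/\ (forall P, P \in Pp -> (exists W, xypath x y W P) /\ ~~ sgn P),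
        (forall P, P \in Pn -> (exists W, xypath x y W P) /\ sgn P),
        (forall T, T \in Tx -> exists C, tadpole x T C),
        (forall T, T \in Ty -> exists C, tadpole y T C) &
        (forall F, F \in Cs -> signed_circuit F)] /\
    (forall F, F \in Pp ++ Pn ++ Tx ++ Ty ++ Cs -> F \subset D) /\
        (forall e, e \in D ->
           count (fun F : {set E} => e \in F) (Pp ++ Pn ++ Tx ++ Ty ++ Cs) = 6).

Definition two_terminal (D : {set E}) (x y : V) : Prop :=
  [/\ D != set0, connectedE D, x \in vset D, y \in vset D &
      (x = y <-> exists e, [/\ D = [set e], e1 e = x, e2 e = x & neg e])].

(* G (the whole graph) is S(H_1,...,H_n), H_i having edge set parts i and
   terminals xs (i-1), xs i. *)
Definition series_decomp (n : nat) (xs : nat -> V) (parts : nat -> {set E})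
  : Prop :=
  [/\ 0 < n,
      forall i, 0 < i <= n -> two_terminal (parts i) (xs i.-1) (xs i),
      forall i j, 0 < i -> i < j -> j <= n -> [disjoint parts i & parts j],
      forall e : E, exists2 i, 0 < i <= n & e \in parts i &
      forall v : V, exists2 i, 0 < i <= n & v \in vset (parts i)] /\
      (forall i j, 0 < i -> i < j -> j <= n ->
        vset (parts i) :&: vset (parts j) =
        if all (fun k => xs k.-1 == xs k) (iota i.+1 (j - i).-1)
        then [set xs i] else set0).

End SignedGraphs.

Section Parts.
Variables (V E : finType) (xs : nat -> V) (parts : nat -> {set E}).

Definition isB0 (i : nat) : bool := xs i.-1 == xs i.
Definition isB2 (i : nat) : bool := (xs i.-1 != xs i) && (1 < #|parts i|).
Definition isB02 (i : nat) : bool := isB0 i || isB2 i.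

Definition B0list (n : nat) : seq {set E} :=
  [seq parts i | i <- [seq i <- iota 1 n | isB0 i]].

Definition first_B02 (n i : nat) : Prop :=
  [/\ 0 < i <= n, isB02 i & forall j, 0 < j < i -> ~~ isB02 j].
Definition last_B02 (n i : nat) : Prop :=
  [/\ 0 < i <= n, isB02 i & forall j, i < j <= n -> ~~ isB02 j].
End Parts.

From Pilot Require Import Defs.
From mathcomp Require Import all_boot zify.
From Stdlib Require Import ArithRing.
Set Implicit Arguments.
Unset Strict Implicit.
Unset Printing Implicit Defensive.

(* While no part is a negative loop or has two or more edges,
   the prefix G_k = H_1 u ... u H_k is a single x_0x_k-path.  From the first
   such part on, keep a 6-cover of G_k made of signed circuits, every negative
   loop twice, four x_0x_k-paths, two tadpoles at x_0 with circuit in the first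
   part of B_0 u B_2 and two tadpoles at x_k with circuit in the latest one, and
   keep it for every admissible sign vector of the four paths.  Since H_{k+1}
   meets G_k only in x_k, the next part is glued on there: a single edge extends
   the paths and the tadpoles at x_k; a negative loop closes the tadpoles at x_k
   into barbells and becomes the new tadpoles at x_{k+1}; a part of B_2
   contributes its Psi(2)-cover, whose paths (suitably ordered to get the signs
   right) extend the old paths, whose tadpoles at x_k close the old ones into
   barbells and whose tadpoles at x_{k+1} are the new ones.  The union of an old
   piece and a new piece is again a path, tadpole or barbell, and multiplicities
   of edges add up. *)

Lemma setI_set1P (T : finType) (A B : {set T}) y :
  A :&: B = [set y] <-> [/\ y \in A, y \in B & A :&: B \subset [set y]].
Proof.
split=> [H | [HA HB /subsetP H]]; first by have := set11 y; rewrite -H inE => /andP[-> ->].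
by apply/setP => v; apply/idP/set1P => [/H/set1P // | ->]; rewrite inE HA HB.
Qed.

Lemma setI_sub1 (T : finType) (A B : {set T}) y v :
  A :&: B \subset [set y] -> v \in A -> v \in B -> v = y.
Proof. by move=> /subsetP H HA HB; apply/set1P/H; rewrite inE HA HB. Qed.

Lemma iota1S k : iota 1 k.+1 = iota 1 k ++ [:: k.+1].
Proof. by rewrite -[k.+1]addn1 iotaD addnC. Qed.

Lemma zip_cons_belast (T1 T2 : Type) (x : T1) (s : seq T1) (t : seq T2) :
  size t = size s -> zip (x :: s) t = zip (belast x s) t.
Proof. by elim: s x t => [|y s IH] x [|z t] //= [st]; rewrite IH. Qed.

(** * Six-fold covers *)

Section Covers.
Variable E : finType.
Implicit Types (A B D F X Y : {set E}) (L : seq {set E}).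

Definition mult L e := count (fun F : {set E} => e \in F) L.

Definition cover6 D L := forall e, mult L e = 6 * (e \in D).

Lemma mult_cat L1 L2 e : mult (L1 ++ L2) e = mult L1 e + mult L2 e.
Proof. exact: count_cat. Qed.

Lemma mult_perm L1 L2 e : perm_eq L1 L2 -> mult L1 e = mult L2 e.
Proof. by move=> /permP H; apply: H. Qed.

Lemma mult0 e : mult [::] e = 0.
Proof. by []. Qed.

Lemma mult_cons2 X Y L e : mult [:: X, Y & L] e = mult [:: X] e + mult (Y :: L) e.
Proof. by rewrite /mult /= addn0. Qed.

Lemma mult_setU1 A B X Y e : [disjoint A & B] -> X \subset A -> Y \subset B ->
  mult [:: X :|: Y] e = mult [:: X] e + mult [:: Y] e.
Proof.
move=> AB sX sY; rewrite /mult /= in_setU !addn0.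
case XE: (e \in X); case YE: (e \in Y) => //.
by have := disjointFr AB (subsetP sX e XE); rewrite (subsetP sY e YE).
Qed.

Lemma cover6_sub D L X : cover6 D L -> X \in L -> X \subset D.
Proof.
move=> HL XL; apply/subsetP => e Xe.
have : 0 < mult L e by rewrite -has_count; apply/hasP; exists X.
by rewrite HL; case: (e \in D).
Qed.

Lemma cover6_all_sub D L : cover6 D L -> all (fun X : {set E} => X \subset D) L.
Proof. by move=> HL; apply/allP => X; exact: cover6_sub. Qed.

Lemma cover6_nseq D : cover6 D (nseq 6 D).
Proof. by move=> e; rewrite /mult count_nseq mulnC. Qed.

Lemma cover6U A B L L1 L2 :
  [disjoint A & B] -> cover6 A L1 -> cover6 B L2 ->
  (forall e, mult L e = mult L1 e + mult L2 e) -> cover6 (A :|: B) L.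
Proof.
move=> AB H1 H2 HL e; rewrite HL H1 H2 in_setU -mulnDr.
by case Ae: (e \in A); rewrite //= (disjointFr AB Ae).
Qed.

End Covers.

(** * Paths, tadpoles and barbells *)

Section SignedGraphs.
Variables (V E : finType) (e1 e2 : E -> V) (neg : E -> bool).

Local Notation joins := (joins e1 e2).
Local Notation vset := (vset e1 e2).
Local Notation xypath := (xypath e1 e2).
Local Notation unbalanced_circuit := (unbalanced_circuit e1 e2 neg).
Local Notation tadpole := (tadpole e1 e2 neg).
Local Notation barbell := (barbell e1 e2 neg).
Local Notation sgn := (sgn neg).

Lemma vsetP (F : {set E}) v :
  reflect (exists2 e, e \in F & (e1 e == v) || (e2 e == v)) (v \in vset F).
Proof.
rewrite inE; apply: (iffP existsP) => [[e /andP[]] | [e]]; first by exists e.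
by exists e; apply/andP.
Qed.

Lemma vsetS (A B : {set E}) : A \subset B -> vset A \subset vset B.
Proof.
by move=> /subsetP AB; apply/subsetP => v /vsetP[e /AB He Hv]; apply/vsetP; exists e.
Qed.

Lemma vsetU (A B : {set E}) : vset (A :|: B) = vset A :|: vset B.
Proof.
apply/setP => v; rewrite in_setU; apply/vsetP/orP => [[e] | [] /vsetP[e He Hv]].
  by rewrite in_setU => /orP[] He Hv; [left | right]; apply/vsetP; exists e.
all: by exists e; rewrite // in_setU He ?orbT.
Qed.

Lemma vset1 f : vset [set f] = [set e1 f; e2 f].
Proof.
apply/setP => v; rewrite !in_set2; apply/vsetP/idP => [[e /set1P->] | Hv].
  by rewrite ![_ == v]eq_sym.
by exists f; rewrite ?set11 // ![_ == v]eq_sym.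
Qed.

Lemma sgnU (A B : {set E}) : [disjoint A & B] -> sgn (A :|: B) = sgn A (+) sgn B.
Proof.
move=> AB; rewrite /Defs.sgn -oddD -cardsUI.
have -> : [set e in A | neg e] :&: [set e in B | neg e] = set0.
  by apply/setP => e; rewrite !inE; case Ae: (e \in A) => //=; rewrite (disjointFr AB Ae) andbF.
have -> : [set e in A :|: B | neg e] = [set e in A | neg e] :|: [set e in B | neg e].
  by apply/setP => e; rewrite !inE andb_orl.
by rewrite cards0 addn0.
Qed.

Lemma sgn1 f : sgn [set f] = neg f.
Proof.
rewrite /Defs.sgn; case Nf: (neg f).
  have -> : [set e in [set f] | neg e] = [set f].
    by apply/setP => e; rewrite !inE andb_idr // => /eqP->.
  by rewrite cards1.
have -> : [set e in [set f] | neg e] = set0.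
  by apply/setP => e; rewrite !inE; apply/negbTE; apply: contraFN Nf => /andP[/eqP<-].
by rewrite cards0.
Qed.

Lemma joinsC e u v : joins e u v = joins e v u.
Proof. by rewrite /Defs.joins orbC. Qed.

Lemma all_joins_swap (es : seq E) (a b : seq V) :
  all (fun p => joins p.1 p.2.1 p.2.2) (zip es (zip a b)) =
  all (fun p => joins p.1 p.2.1 p.2.2) (zip es (zip b a)).
Proof.
by elim: es a b => [|e es IH] [|u a] [|v b] //=; rewrite IH joinsC.
Qed.

Lemma xypath_nil x : xypath x x [set x] set0.
Proof.
by exists [::], [::]; split; [split | split; apply/setP => v; rewrite !inE].
Qed.

Lemma xypath_trivial x W P : xypath x x W P -> W = [set x] /\ P = set0.
Proof.
case=> [[|v vs] [es [[Hs Hu _ _ Hl] [-> ->]]]].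
  by case: es Hs => // _; split; apply/setP => u; rewrite !inE.
by move: Hu; rewrite cons_uniq -Hl /= mem_last.
Qed.

Lemma xypath_ends x y W P : xypath x y W P -> x \in W /\ y \in W.
Proof.
by case=> vs [es [[_ _ _ _ Hl] [-> _]]]; rewrite !in_set mem_head -Hl mem_last.
Qed.

Lemma xypath_vertices x y W P : xypath x y W P -> W \subset x |: vset P.
Proof.
case=> vs [es [[Hs _ _ Ha _] [-> ->]]]; apply/subsetP => v.
rewrite in_set in_setU1 => /predU1P[-> | Hv]; first by rewrite eqxx.
apply/orP; right.
elim: vs x es Hs Ha Hv => [|w vs IH] x [|e es] //= [Hs] /andP[Hj Ha].
move=> /predU1P[-> | Hv].
  apply/vsetP; exists e; rewrite ?in_set ?mem_head //.
  by move: Hj; rewrite /Defs.joins /= => /orP[] /andP[] /eqP-> /eqP->; rewrite eqxx ?orbT.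
apply: subsetP (IH w es Hs Ha Hv); apply: vsetS.
by apply/subsetP => f; rewrite !in_set in_cons => ->; rewrite orbT.
Qed.

Lemma xypath_edge f x y : joins f x y -> x != y -> xypath x y [set x; y] [set f].
Proof.
move=> Hj Hxy; exists [:: y], [:: f]; split; first by split; rewrite //= ?inE ?Hxy ?Hj.
by split; apply/setP => v; rewrite !inE.
Qed.

Lemma xypath_cat x y z W1 P1 W2 P2 :
  xypath x y W1 P1 -> xypath y z W2 P2 ->
  W1 :&: W2 \subset [set y] -> [disjoint P1 & P2] ->
  xypath x z (W1 :|: W2) (P1 :|: P2).
Proof.
case=> vs1 [es1 [[Hs1 Hu1 Hue1 Ha1 Hl1] [-> ->]]].
case=> vs2 [es2 [[Hs2 Hu2 Hue2 Ha2 Hl2] [-> ->]]] HW HP.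
exists (vs1 ++ vs2), (es1 ++ es2); split; first split.
- by rewrite !size_cat Hs1 Hs2.
- rewrite -cat_cons cat_uniq Hu1 /=; move: Hu2 => /= /andP[Hy ->]; rewrite andbT.
  apply/hasPn => v Hv; apply: contra Hy => Hv1.
  have <- : v = y by apply: (setI_sub1 HW); rewrite inE ?Hv1 // in_cons Hv orbT.
  exact: Hv.
- rewrite cat_uniq Hue1 Hue2 andbT /=; apply/hasPn => e He.
  by have := @disjointFl _ _ _ e HP; rewrite !in_set He => /(_ isT) ->.
- rewrite -cat_cons (lastI x vs1) Hl1 -cats1 -catA /=.
  rewrite zip_cat ?size_belast // zip_cat ?size_zip ?size_belast ?Hs1 ?minnn //.
  by rewrite all_cat -zip_cons_belast // Ha1.
- by rewrite last_cat Hl1.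
split; apply/setP => v; rewrite !inE ?mem_cat //.
case: (v =P y) => [-> | _]; last by case: (v == x); case: (v \in vs1).
by have := mem_last x vs1; rewrite Hl1 in_cons => /orP[] ->; rewrite ?orbT.
Qed.

Lemma xypath_rev x y W P : xypath x y W P -> xypath y x W P.
Proof.
case=> vs [es [[Hs Hu Hue Ha Hl] [-> ->]]].
have Hr : rcons (rev vs) x = y :: rev (belast x vs).
  by rewrite -rev_cons (lastI x vs) Hl rev_rcons.
have /rcons_inj[Hb Hx] : rcons (belast y (rev (belast x vs))) (last y (rev (belast x vs)))
                         = rcons (rev vs) x by rewrite -lastI Hr.
exists (rev (belast x vs)), (rev es); split; first split.
- by rewrite !size_rev size_belast.
- by rewrite -Hr rcons_uniq mem_rev rev_uniq.
- by rewrite rev_uniq.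
- rewrite zip_cons_belast ?size_rev ?size_belast // Hb.
  rewrite -rev_zip ?size_belast // -rev_zip ?size_zip ?size_belast ?minnn //.
  by rewrite all_rev all_joins_swap -zip_cons_belast.
- exact: Hx.
split; apply/setP => v; rewrite !in_set ?mem_rev //.
by rewrite -Hr mem_rcons !in_cons mem_rev.
Qed.

Lemma loop_unbalanced_circuit l : e1 l = e2 l -> neg l -> unbalanced_circuit [set l].
Proof.
move=> Hl Nl; have Hv : vset [set l] = [set e1 l] by rewrite vset1 -Hl setUid.
split; last by rewrite sgn1.
split.
- by apply/set0Pn; exists l; rewrite set11.
- move=> u v; rewrite Hv => /set1P-> /set1P->.
  by exists [set e1 l], set0; split; [exact: xypath_nil | exact: sub0set].
- by move=> v; rewrite Hv => /set1P->; rewrite /deg big_set1 -Hl eqxx.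
Qed.

Lemma loop_tadpole l : e1 l = e2 l -> neg l -> tadpole (e1 l) [set l] [set l].
Proof.
move=> Hl Nl; split; first exact: loop_unbalanced_circuit.
exists (e1 l), [set e1 l], set0; split; [exact: xypath_nil | | by rewrite set0U].
by rewrite vset1 -Hl setUid setIid.
Qed.

Lemma tadpole_decomp z T C : tadpole z T C ->
  exists y W P, [/\ xypath z y W P, W :&: vset C = [set y], T = P :|: C &
                    W :|: vset C \subset z |: vset T].
Proof.
case=> _ [y [W [P [HP HWC ->]]]]; exists y, W, P; split=> //.
by rewrite vsetU setUA; apply: setSU; exact: xypath_vertices HP.
Qed.

Lemma tadpole_circuit_sub x T C : tadpole x T C -> C \subset T.
Proof. by case=> _ [y [W [P [_ _ ->]]]]; exact: subsetUr. Qed.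

Lemma tadpole_cat x z W Q T C :
  xypath x z W Q -> tadpole z T C ->
  W :&: vset T \subset [set z] -> [disjoint Q & T] -> tadpole x (Q :|: T) C.
Proof.
move=> HQ HT Hsep HQT; split; first by case: HT.
have [y [W' [P [HP /setI_set1P[HyW' HyC HW'C] HTE HW'T]]]] := tadpole_decomp HT.
have sep v : v \in W -> v \in W' :|: vset C -> v = z.
  move=> Hv /(subsetP HW'T); rewrite in_setU1 => /predU1P[// | HvT].
  exact: setI_sub1 Hsep Hv HvT.
exists y, (W :|: W'), (Q :|: P); split; last by rewrite HTE setUA.
  apply: xypath_cat HQ HP _ _; last by apply: disjointWr HQT; rewrite HTE subsetUl.
  by apply/subsetP => v /setIP[Hv Hv']; apply/set1P/sep; rewrite // in_setU Hv'.
apply/setI_set1P; split; [by rewrite in_setU HyW' orbT | done |].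
apply/subsetP => v /setIP[/setUP[Hv | Hv] HvC]; last by apply: (subsetP HW'C); rewrite inE Hv HvC.
have Ez : v = z by apply: sep; rewrite // in_setU HvC orbT.
subst v; apply: (subsetP HW'C); rewrite inE HvC andbT.
by case: (xypath_ends HP).
Qed.

Lemma barbell_of_tadpoles z T1 C1 T2 C2 :
  tadpole z T1 C1 -> tadpole z T2 C2 ->
  vset T1 :&: vset T2 \subset [set z] -> [disjoint T1 & T2] -> barbell (T1 :|: T2).
Proof.
move=> HT1 HT2 Hsep HT; have [HC1 _] := HT1; have [HC2 _] := HT2.
have [y1 [W1 [P1 [HP1 /setI_set1P[Hy1 Hy1C HI1] HT1E HW1]]]] := tadpole_decomp HT1.
have [y2 [W2 [P2 [HP2 /setI_set1P[Hy2 Hy2C HI2] HT2E HW2]]]] := tadpole_decomp HT2.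
have sep v : v \in W1 :|: vset C1 -> v \in W2 :|: vset C2 -> v = z.
  move=> /(subsetP HW1) /setU1P[// | H1] /(subsetP HW2) /setU1P[// | H2].
  exact: setI_sub1 Hsep H1 H2.
have zC1 : z \in vset C1 -> z = y1.
  by move=> H; apply: setI_sub1 HI1 _ H; case: (xypath_ends HP1).
have zC2 : z \in vset C2 -> z = y2.
  by move=> H; apply: setI_sub1 HI2 _ H; case: (xypath_ends HP2).
have HC12 : [disjoint C1 & C2].
  by apply: disjointW HT; rewrite ?HT1E ?HT2E subsetUr.
exists C1, C2; split=> //.
have [/andP[/eqP Ey1 /eqP Ey2] | Hy] := boolP ((y1 == z) && (y2 == z)).
  subst y1 y2; left.
  have [_ E1] := xypath_trivial HP1; have [_ E2] := xypath_trivial HP2.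
  split=> //; last by rewrite HT1E HT2E E1 E2 !set0U.
  apply/eqP/cards1P; exists z; apply/setI_set1P; split=> //.
  by apply/subsetP => v /setIP[H1 H2]; apply/set1P/sep; rewrite in_setU ?H1 ?H2 orbT.
right; exists y1, y2, (W1 :|: W2), (P1 :|: P2); split; last first.
  by rewrite HT1E HT2E; apply/setP => e; rewrite !inE; do 4!case: (e \in _).
split=> //.
- apply/pred0P => v /=; apply/negbTE/negP => /andP[H1 H2]; move: Hy.
  have Ez := sep v; rewrite !in_setU H1 H2 !orbT in Ez; have {}Ez := Ez isT isT.
  by subst v; rewrite -(zC1 H1) -(zC2 H2) !eqxx.
- apply: xypath_cat (xypath_rev HP1) HP2 _ _.
    by apply/subsetP => v /setIP[H1 H2]; apply/set1P/sep; rewrite in_setU ?H1 ?H2.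
  by apply: disjointW HT; rewrite ?HT1E ?HT2E subsetUl.
apply/setP => v; apply/idP/idP => [/setIP[/setUP[H1 | H1] /setUP[H2 | H2]] | ].
- by rewrite (setI_sub1 HI1 H1 H2) !inE eqxx.
- have Ez : v = z by apply: sep; rewrite in_setU ?H1 ?H2 ?orbT.
  by subst v; rewrite {1}(zC2 H2) !inE eqxx orbT.
- have Ez : v = z by apply: sep; rewrite in_setU ?H1 ?H2 ?orbT.
  by subst v; rewrite {1}(zC1 H2) !inE eqxx.
- by rewrite (setI_sub1 HI2 H1 H2) !inE eqxx orbT.
by move=> /set2P[]->; rewrite in_setI !in_setU ?Hy1 ?Hy1C ?Hy2 ?Hy2C ?orbT.
Qed.

Lemma psi_cover2_spec D x y : has_psi_cover e1 e2 neg D x y 2 ->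
  exists a b c d l1 l2 r1 r2 (Cs : seq {set E}),
  [/\ [/\ (exists W, xypath x y W a) /\ sgn a = false,
          (exists W, xypath x y W b) /\ sgn b = false,
          (exists W, xypath x y W c) /\ sgn c &
          (exists W, xypath x y W d) /\ sgn d],
      [/\ exists C, tadpole x l1 C, exists C, tadpole x l2 C,
          exists C, tadpole y r1 C & exists C, tadpole y r2 C],
      {in Cs, forall F, signed_circuit e1 e2 neg F} &
      cover6 D ([:: a; b; c; d] ++ [:: l1; l2] ++ [:: r1; r2] ++ Cs)].
Proof.
case=> Pp [Pn [Tx [Ty [Cs [[szp szn szx szy] [[Hp Hn Hx Hy HCs] [Hsub Hcnt]]]]]]].
case: Pp szp Hp Hsub Hcnt => [|a [|b []]] //= _ Hp.
case: Pn szn Hn => [|c [|d []]] //= _ Hn.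
case: Tx szx Hx => [|l1 [|l2 []]] //= _ Hx.
case: Ty szy Hy => [|r1 [|r2 []]] //= _ Hy Hsub Hcnt.
have in2 (T : eqType) (u v : T) : (u \in [:: u; v]) * (v \in [:: u; v]).
  by rewrite !inE !eqxx orbT.
exists a, b, c, d, l1, l2, r1, r2, Cs; split=> //.
- have [[Ha /negbTE Sa] [Hb /negbTE Sb]] := (Hp a (in2 _ a b).1, Hp b (in2 _ a b).2).
  by split=> //; [exact: Hn c (in2 _ c d).1 | exact: Hn d (in2 _ c d).2].
- by split; [exact: Hx _ (in2 _ l1 l2).1 | exact: Hx _ (in2 _ l1 l2).2
            | exact: Hy _ (in2 _ r1 r2).1 | exact: Hy _ (in2 _ r1 r2).2].
move=> e; case De: (e \in D); first exact: Hcnt.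
apply/eqP; rewrite -leqn0 leqNgt -has_count; apply/hasPn => F HF.
by apply: contraFN De => eF; apply: subsetP (Hsub F HF) e eF.
Qed.

End SignedGraphs.

(** * Sign vectors of the four paths *)

(* Sign vectors (true = negative) of the four x_0x_k-paths once r parts of
   B_2 have been added; before the first one, the four paths are one path of
   sign c. *)
Definition admissible (r : nat) (c s1 s2 s3 s4 : bool) : bool :=
  match r with
  | 0 => [&& s1 == c, s2 == c, s3 == c & s4 == c]
  | 1 => s1 + s2 + s3 + s4 == 2
  | _ => ~~ (s1 (+) s2 (+) s3 (+) s4)
  end.

Lemma admissible_xor r c b s1 s2 s3 s4 :
  admissible r (c (+) b) s1 s2 s3 s4 ->
  admissible r c (s1 (+) b) (s2 (+) b) (s3 (+) b) (s4 (+) b).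
Proof. by case: r => [|[|r]]; case: s1; case: s2; case: s3; case: s4; case: b; case: c. Qed.

Lemma admissible_split r c s1 s2 s3 s4 :
  admissible r.+1 c s1 s2 s3 s4 ->
  exists p1 p2 p3 p4 : bool, (p1 + p2 + p3 + p4 == 2) &&
    admissible r c (s1 (+) p1) (s2 (+) p2) (s3 (+) p3) (s4 (+) p4).
Proof.
case: r => [|[|r]] /=; case: s1; case: s2; case: s3; case: s4; case: c => // _;
by do 4!(exists true + exists false).
Qed.

Lemma admissible_final r c th :
  0 < r -> (r = 1 -> th = false) -> admissible r c th th true true.
Proof. by case: r => [|[|r]] // _ H; rewrite /= ?(H erefl) ?addbb. Qed.

Lemma perm_pick_by_key (T : eqType) (f : T -> bool) a b c d (p1 p2 p3 p4 : bool) :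
  f a = false -> f b = false -> f c -> f d -> p1 + p2 + p3 + p4 == 2 ->
  exists x1 x2 x3 x4,
    [/\ f x1 = p1, f x2 = p2, f x3 = p3, f x4 = p4 &
        perm_eq [:: x1; x2; x3; x4] [:: a; b; c; d]].
Proof.
move=> fa fb fc fd; case: p1; case: p2; case: p3; case: p4 => // _;
[ exists c, d, a, b | exists c, a, d, b | exists c, a, b, d
| exists a, c, d, b | exists a, c, b, d | exists a, b, c, d ];
by split; rewrite ?fa ?fb ?fc ?fd //; apply/permP => q /=; lia.
Qed.

(** * Series connections *)

Section SeriesConnection.
Variables (V E : finType) (e1 e2 : E -> V) (neg : E -> bool).
Variables (n : nat) (xs : nat -> V) (parts : nat -> {set E}).
Hypothesis Hdec : series_decomp e1 e2 neg n xs parts.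
Hypothesis Hpsi : forall i, 0 < i <= n -> isB2 xs parts i ->
  has_psi_cover e1 e2 neg (parts i) (xs i.-1) (xs i) 2.

Local Notation vset := (vset e1 e2).
Local Notation xypath := (xypath e1 e2).
Local Notation tadpole := (tadpole e1 e2 neg).
Local Notation signed_circuit := (signed_circuit e1 e2 neg).
Local Notation sgn := (sgn neg).
Local Notation isB02 := (isB02 xs parts).
Local Notation isB2 := (isB2 xs parts).
Local Notation B0list := (B0list xs parts).

Definition prefix k : {set E} := [set e | has (fun i => e \in parts i) (iota 1 k)].

(* [xs 0] only matters for the empty prefix. *)
Definition prefixV k : {set V} := xs 0 |: vset (prefix k).

Lemma prefixP k e : reflect (exists2 i, 0 < i <= k & e \in parts i) (e \in prefix k).
Proof.
rewrite inE; apply: (iffP hasP) => [] [i Hi He]; exists i => //;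
by rewrite mem_iota add1n ltnS in Hi *.
Qed.

Lemma prefix0 : prefix 0 = set0.
Proof. by apply/setP => e; rewrite !inE. Qed.

Lemma prefixS k : prefix k.+1 = prefix k :|: parts k.+1.
Proof. by apply/setP => e; rewrite !inE iota1S has_cat /= orbF. Qed.

Lemma prefix_n : prefix n = setT.
Proof.
case: Hdec => [[_ _ _ Hcov _] _]; apply/setP => e; rewrite in_setT.
by have [i Hi He] := Hcov e; apply/prefixP; exists i.
Qed.

Lemma part_terminals k :
  k < n -> xs k \in vset (parts k.+1) /\ xs k.+1 \in vset (parts k.+1).
Proof. by case: Hdec => [[_ Htt _ _ _] _] Hk; case: (Htt k.+1). Qed.

Lemma disjoint_prefix_part k : k < n -> [disjoint prefix k & parts k.+1].
Proof.
case: Hdec => [[_ _ Hdisj _ _] _] Hk; rewrite -setI_eq0; apply/eqP/setP => e.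
rewrite in_setI in_set0; apply/negbTE/andP => [[/prefixP[i /andP[i0 ik] Hi] He]].
by have := disjointFr (Hdisj i k.+1 i0 ik Hk) Hi; rewrite He.
Qed.

Lemma xs_chain i m : all (fun k => xs k.-1 == xs k) (iota i.+1 m) -> xs (i + m) = xs i.
Proof.
elim: m i => [|m IH] i /=; first by rewrite addn0.
by move=> /andP[/eqP H1 H2]; rewrite addnS -addSn IH.
Qed.

Lemma part_vertex_sep i k v : 0 < i <= k -> k < n ->
  v \in vset (parts i) -> v \in vset (parts k.+1) -> v = xs k.
Proof.
case: Hdec => _ Hint /andP[i0 ik] Hk Hv Hv'.
have := Hint i k.+1 i0 ik Hk; case: ifP => [Hall | _] HI; last first.
  by move: (Hv); rewrite -[_ \in _]andbT -Hv' -in_setI HI inE.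
have -> : k = i + (k.+1 - i).-1 by lia.
by rewrite (xs_chain Hall); apply/set1P; rewrite -HI inE Hv Hv'.
Qed.

Lemma prefixV_part_sep k : k < n -> prefixV k :&: vset (parts k.+1) \subset [set xs k].
Proof.
move=> Hk; apply/subsetP => v /setIP[/setU1P[-> | Hv] Hv']; apply/set1P.
  case: k Hk Hv' => // k Hk Hv'.
  by apply: (@part_vertex_sep 1) => //; case: (part_terminals (ltn_trans (ltn0Sn k) Hk)).
have [f Hf Hfv] := vsetP e1 e2 _ _ Hv; have [i Hi Hfi] := prefixP k f Hf.
by apply: part_vertex_sep Hi Hk _ Hv'; apply/vsetP; exists f.
Qed.

Lemma part_cases k : k < n ->
  [\/ exists2 l, parts k.+1 = [set l] &
                 [/\ xs k.+1 = xs k, e1 l = xs k, e2 l = xs k & neg l],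
      exists2 f, parts k.+1 = [set f] &
                 [/\ ~~ isB02 k.+1, xs k != xs k.+1 & joins e1 e2 f (xs k) (xs k.+1)]
    | isB2 k.+1].
Proof.
case: Hdec => [[_ Htt _ _ _] _] Hk; have [Hne _ Hx Hy Hloop] := Htt k.+1 Hk.
have [Exk | Nxk] := eqVneq (xs k) (xs k.+1).
  by have [l [Hl H1 H2 Nl]] := Hloop.1 Exk; constructor 1; exists l.
have [B2 | nB2] := boolP (isB2 k.+1); first by constructor 3.
constructor 2.
have [f Pf] : exists f, parts k.+1 = [set f].
  apply/cards1P; rewrite eqn_leq card_gt0 Hne andbT leqNgt.
  by move: nB2; rewrite /isB2 /= Nxk.
exists f => //; split=> //; first by rewrite /isB02 /isB0 /= negb_or (negbTE Nxk).
move: Hx Hy Nxk; rewrite Pf vset1 !inE /Defs.joins.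
by move=> /orP[] /eqP-> /orP[] /eqP->; rewrite ?eqxx ?orbT.
Qed.

Lemma old_path_vertices k y W P :
  xypath (xs 0) y W P -> P \subset prefix k -> W \subset prefixV k.
Proof. by move=> HP sP; apply: subset_trans (xypath_vertices HP) (setUS _ (vsetS _ _ sP)). Qed.

Lemma old_vertices k (F : {set E}) : F \subset prefix k -> vset F \subset prefixV k.
Proof. by move=> sF; apply: subset_trans (vsetS _ _ sF) (subsetU1 _ _). Qed.

Lemma new_path_vertices k x y W Q : x \in vset (parts k.+1) ->
  xypath x y W Q -> Q \subset parts k.+1 -> W \subset vset (parts k.+1).
Proof.
move=> Hx HQ sQ; apply: subset_trans (xypath_vertices HQ) _.
by rewrite subUset sub1set Hx vsetS.
Qed.

Lemma old_new_sep k (A B : {set V}) : k < n ->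
  A \subset prefixV k -> B \subset vset (parts k.+1) -> A :&: B \subset [set xs k].
Proof. by move=> Hk HA HB; apply: subset_trans (setISS HA HB) (prefixV_part_sep Hk). Qed.

Lemma old_new_disjoint k (A B : {set E}) : k < n ->
  A \subset prefix k -> B \subset parts k.+1 -> [disjoint A & B].
Proof. by move=> Hk HA HB; apply: disjointW HA HB (disjoint_prefix_part Hk). Qed.

Definition prefix_path k s P := (exists W, xypath (xs 0) (xs k) W P) /\ sgn P = s.

Definition part_path k s Q := (exists W, xypath (xs k) (xs k.+1) W Q) /\ sgn Q = s.

Definition first_tadpole T := exists i C,
  [/\ first_B02 xs parts n i, tadpole (xs 0) T C & C \subset parts i].

Definition last_tadpole k T := exists i C,
  [/\ last_B02 xs parts k i, tadpole (xs k) T C & C \subset parts i].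

Lemma prefix_path_extend k s p P Q : k < n ->
  prefix_path k (s (+) p) P -> P \subset prefix k ->
  part_path k p Q -> Q \subset parts k.+1 -> prefix_path k.+1 s (P :|: Q).
Proof.
move=> Hk [[W0 HP] SP] sP [[W HQ] SQ] sQ; have PQ := old_new_disjoint Hk sP sQ.
split; last by rewrite sgnU // SP SQ addbK.
exists (W0 :|: W); apply: (xypath_cat HP HQ _ PQ).
apply: (old_new_sep Hk (old_path_vertices HP sP) (new_path_vertices _ HQ sQ)).
by case: (part_terminals Hk).
Qed.

Lemma last_tadpole_extend k R W Q : k < n -> ~~ isB02 k.+1 ->
  last_tadpole k R -> R \subset prefix k ->
  xypath (xs k) (xs k.+1) W Q -> Q \subset parts k.+1 -> last_tadpole k.+1 (R :|: Q).
Proof.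
move=> Hk nB [i [C [[/andP[i0 ik] Bi Hlast] HR sC]]] sR HQ sQ; exists i, C; split=> //.
  split; rewrite ?i0 ?(leqW ik) // => j /andP[ij].
  by rewrite leq_eqVlt ltnS => /predU1P[-> // | jk]; apply: Hlast; rewrite ij.
rewrite setUC; apply: (tadpole_cat (xypath_rev HQ) HR); last first.
  by rewrite disjoint_sym (old_new_disjoint Hk sR sQ).
rewrite setIC; apply: (old_new_sep Hk (old_vertices sR) (new_path_vertices _ HQ sQ)).
by case: (part_terminals Hk).
Qed.

Lemma first_tadpole_new k W P T C : k < n -> first_B02 xs parts n k.+1 ->
  xypath (xs 0) (xs k) W P -> P \subset prefix k ->
  tadpole (xs k) T C -> T \subset parts k.+1 -> first_tadpole (P :|: T).
Proof.
move=> Hk HF HP sP HT sT; exists k.+1, C; split=> //.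
  apply: (tadpole_cat HP HT _ (old_new_disjoint Hk sP sT)).
  exact: old_new_sep Hk (old_path_vertices HP sP) (vsetS _ _ sT).
exact: subset_trans (tadpole_circuit_sub HT) sT.
Qed.

Lemma barbell_new k R T C : k < n ->
  last_tadpole k R -> R \subset prefix k ->
  tadpole (xs k) T C -> T \subset parts k.+1 -> signed_circuit (R :|: T).
Proof.
move=> Hk [i [C' [_ HR _]]] sR HT sT; right.
apply: (barbell_of_tadpoles HR HT _ (old_new_disjoint Hk sR sT)).
exact: old_new_sep Hk (old_vertices sR) (vsetS _ _ sT).
Qed.

Lemma last_tadpole_new k T C : isB02 k.+1 ->
  tadpole (xs k.+1) T C -> T \subset parts k.+1 -> last_tadpole k.+1 T.
Proof.
move=> B HT sT; exists k.+1, C; split=> //; last exact: subset_trans (tadpole_circuit_sub HT) sT.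
by split; rewrite ?ltn0Sn ?leqnn // => j /andP[/leq_trans H /H]; rewrite ltnn.
Qed.

(* Reordering the four paths of the Psi(2)-cover realises any sign vector
   with exactly two negative entries. *)
Lemma B2_part_data k (p1 p2 p3 p4 : bool) : k < n -> isB2 k.+1 -> p1 + p2 + p3 + p4 == 2 ->
  exists (Q1 Q2 Q3 Q4 l1 l2 r1 r2 : {set E}) (Cs : seq {set E}),
  [/\ [/\ part_path k p1 Q1, part_path k p2 Q2, part_path k p3 Q3 & part_path k p4 Q4],
      [/\ exists C, tadpole (xs k) l1 C, exists C, tadpole (xs k) l2 C,
          last_tadpole k.+1 r1 & last_tadpole k.+1 r2],
      {in Cs, forall F, signed_circuit F} &
      cover6 (parts k.+1) ([:: Q1; Q2; Q3; Q4] ++ [:: l1; l2] ++ [:: r1; r2] ++ Cs)].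
Proof.
move=> Hk B2 Hp; have B02 : isB02 k.+1 by rewrite /isB02 B2 orbT.
have [a [b [c [d [l1 [l2 [r1 [r2 [Cs [[Ha Hb Hc Hd] [Hl1 Hl2 [C1 Hr1] [C2 Hr2]] HCs Hcov]]]]]]]]]]
  := psi_cover2_spec (Hpsi (i := k.+1) Hk B2).
have [Q1 [Q2 [Q3 [Q4 [S1 S2 S3 S4 Hperm]]]]] :=
  perm_pick_by_key Ha.2 Hb.2 Hc.2 Hd.2 Hp.
have HQ X : X \in [:: Q1; Q2; Q3; Q4] -> exists W, xypath (xs k) (xs k.+1) W X.
  by rewrite (perm_mem Hperm) !inE => /or4P[] /eqP->; [case: Ha | case: Hb | case: Hc | case: Hd].
have sub X : X \in [:: r1; r2] -> X \subset parts k.+1.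
  by move=> HX; apply: cover6_sub Hcov _; rewrite !mem_cat HX !orbT.
exists Q1, Q2, Q3, Q4, l1, l2, r1, r2, Cs; split=> //.
- by split; split; rewrite ?S1 ?S2 ?S3 ?S4 //; apply: HQ; rewrite !inE eqxx ?orbT.
- split=> //; [apply: last_tadpole_new B02 Hr1 _ | apply: last_tadpole_new B02 Hr2 _];
  by apply: sub; rewrite !inE eqxx ?orbT.
by move=> e; rewrite -Hcov !mult_cat (mult_perm _ Hperm).
Qed.

Definition nB2 k := count isB2 (iota 1 k).

Lemma nB2S k : nB2 k.+1 = nB2 k + isB2 k.+1.
Proof. by rewrite /nB2 iota1S count_cat /= addn0. Qed.

Lemma B0listS k :
  B0list k.+1 = B0list k ++ (if isB0 xs k.+1 then [:: parts k.+1] else [::]).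
Proof. by rewrite /Defs.B0list iota1S filter_cat map_cat /=; case: ifP. Qed.

Lemma no_B02_prefix k :
  (forall j, 0 < j <= k -> ~~ isB02 j) -> nB2 k = 0 /\ B0list k = [::].
Proof.
move=> H; have nB j : j \in iota 1 k -> ~~ isB0 xs j && ~~ isB2 j.
  by rewrite mem_iota add1n ltnS => /H; rewrite /isB02 negb_or.
split; first by rewrite /nB2 (eq_in_count (a2 := pred0)) ?count_pred0 // => j /nB /andP[_ /negbTE].
by rewrite /Defs.B0list (eq_in_filter (a2 := pred0)) ?filter_pred0 // => j /nB /andP[/negbTE].
Qed.

Lemma first_B02_next k : (forall j, 0 < j <= k -> ~~ isB02 j) -> k < n ->
  isB02 k.+1 -> first_B02 xs parts n k.+1.
Proof. by move=> H Hk B; split=> // j /andP[j0]; rewrite ltnS => jk; apply: H; rewrite j0. Qed.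

Definition prefix_is_path k :=
  (forall j, 0 < j <= k -> ~~ isB02 j) /\ exists W, xypath (xs 0) (xs k) W (prefix k).

Definition prefix_has_cover k := exists c, forall s1 s2 s3 s4 : bool,
  admissible (nB2 k) c s1 s2 s3 s4 ->
  exists (F0 : seq {set E}) (P1 P2 P3 P4 T1 T2 R1 R2 : {set E}),
  [/\ {in F0, forall F, signed_circuit F},
      [/\ prefix_path k s1 P1, prefix_path k s2 P2, prefix_path k s3 P3 & prefix_path k s4 P4],
      [/\ first_tadpole T1, first_tadpole T2, last_tadpole k R1 & last_tadpole k R2] &
      cover6 (prefix k) (F0 ++ B0list k ++ B0list k ++
                         [:: P1; P2; P3; P4] ++ [:: T1; T2] ++ [:: R1; R2])].

Lemma edge_part_path k f : xs k != xs k.+1 ->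
  joins e1 e2 f (xs k) (xs k.+1) -> part_path k (neg f) [set f].
Proof. by move=> Nx Hj; split; [exists [set xs k; xs k.+1]; exact: xypath_edge | exact: sgn1]. Qed.

Lemma prefix_is_path_edge k f : k < n -> prefix_is_path k ->
  parts k.+1 = [set f] -> ~~ isB02 k.+1 -> xs k != xs k.+1 ->
  joins e1 e2 f (xs k) (xs k.+1) -> prefix_is_path k.+1.
Proof.
move=> Hk [noB [W HP]] Pf nB Nx Hj; split.
  by move=> j /andP[j0]; rewrite leq_eqVlt ltnS => /predU1P[-> // | jk]; apply: noB; rewrite j0.
have HP0 : prefix_path k (sgn (prefix k) (+) neg f (+) neg f) (prefix k).
  by split; [exists W | rewrite addbK].
have sf : [set f] \subset parts k.+1 by rewrite Pf.
have [[W' HP'] _] := prefix_path_extend Hk HP0 (subxx _) (edge_part_path Nx Hj) sf.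
by exists W'; rewrite prefixS Pf.
Qed.

Lemma prefix_is_path_loop k l : k < n -> prefix_is_path k -> parts k.+1 = [set l] ->
  xs k.+1 = xs k -> e1 l = xs k -> e2 l = xs k -> neg l -> prefix_has_cover k.+1.
Proof.
move=> Hk [noB [W HP]] Pl Ex H1 H2 Nl.
have B0 : isB0 xs k.+1 by rewrite /isB0 /= Ex eqxx.
have nB2 : isB2 k.+1 = false by rewrite /isB2 /= Ex eqxx.
have B02 : isB02 k.+1 by rewrite /isB02 B0.
have [n0 b0] := no_B02_prefix noB.
have Tl x : x = xs k -> tadpole x [set l] [set l].
  by move=> ->; rewrite -H1; apply: loop_tadpole; rewrite ?H1.
have sl : [set l] \subset parts k.+1 by rewrite Pl.
set Q := prefix k; exists (sgn Q) => s1 s2 s3 s4.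
rewrite nB2S n0 nB2 => /and4P[/eqP-> /eqP-> /eqP-> /eqP->].
have PQ : prefix_path k.+1 (sgn Q) Q by split=> //; exists W; rewrite Ex.
have TQ : first_tadpole (Q :|: [set l]).
  exact: first_tadpole_new Hk (first_B02_next noB Hk B02) HP (subxx _) (Tl _ erefl) sl.
have Rl : last_tadpole k.+1 [set l] := last_tadpole_new B02 (Tl _ Ex) sl.
exists [::], Q, Q, Q, Q, (Q :|: [set l]), (Q :|: [set l]), [set l], [set l]; split=> //.
rewrite B0listS b0 B0 prefixS Pl.
have QL : [disjoint Q & [set l]] by rewrite -Pl; exact: disjoint_prefix_part.
apply: (cover6U QL (cover6_nseq Q) (cover6_nseq [set l])) => e.
by rewrite !mult_cat !mult_cons2 !(mult_setU1 _ QL) ?subxx // mult0 -!plusE; ring.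
Qed.

Lemma prefix_is_path_B2 k : k < n -> prefix_is_path k -> isB2 k.+1 ->
  prefix_has_cover k.+1.
Proof.
move=> Hk [noB [W HP]] B2.
have nB0 : isB0 xs k.+1 = false by move: B2; rewrite /isB2 /isB0 => /andP[/negbTE].
have B02 : isB02 k.+1 by rewrite /isB02 B2 orbT.
have [n0 b0] := no_B02_prefix noB.
set Q := prefix k; exists false => s1 s2 s3 s4.
rewrite nB2S n0 B2 => Hs0.
have [p1 [p2 [p3 [p4 /andP[Hp Hs]]]]] := admissible_split (r := 0) (c := sgn Q) Hs0.
have [Q1 [Q2 [Q3 [Q4 [l1 [l2 [r1 [r2 [Cs [[HQ1 HQ2 HQ3 HQ4] [[C1 Hl1] [C2 Hl2] Hr1 Hr2] HCs Hnew]]]]]]]]]]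
  := B2_part_data Hk B2 Hp.
move: (cover6_all_sub Hnew); rewrite !all_cat => /and4P[newQ newl _ _].
have /and5P[sQ1 sQ2 sQ3 sQ4 _] := newQ; have /and3P[sl1 sl2 _] := newl.
have ext s p Qi : s (+) p == sgn Q -> part_path k p Qi -> Qi \subset parts k.+1 ->
    prefix_path k.+1 s (Q :|: Qi).
  by move=> /eqP Hsp; apply: prefix_path_extend Hk _ (subxx _); split; [exists W | rewrite Hsp].
have first l C : tadpole (xs k) l C -> l \subset parts k.+1 -> first_tadpole (Q :|: l).
  exact: first_tadpole_new Hk (first_B02_next noB Hk B02) HP (subxx _).
move: Hs => /and4P[Hs1 Hs2 Hs3 Hs4].
exists Cs, (Q :|: Q1), (Q :|: Q2), (Q :|: Q3), (Q :|: Q4), (Q :|: l1), (Q :|: l2), r1, r2.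
split=> //.
- by split; [exact: ext Hs1 HQ1 sQ1 | exact: ext Hs2 HQ2 sQ2
            | exact: ext Hs3 HQ3 sQ3 | exact: ext Hs4 HQ4 sQ4].
- by split=> //; [exact: first Hl1 sl1 | exact: first Hl2 sl2].
rewrite B0listS b0 nB0 prefixS.
apply: (cover6U (disjoint_prefix_part Hk) (cover6_nseq Q) Hnew) => e.
rewrite !mult_cat !mult_cons2 !(mult_setU1 _ (disjoint_prefix_part Hk)) ?subxx //.
by rewrite mult0 -!plusE; ring.
Qed.

Lemma prefix_has_cover_edge k f : k < n -> prefix_has_cover k ->
  parts k.+1 = [set f] -> ~~ isB02 k.+1 -> xs k != xs k.+1 ->
  joins e1 e2 f (xs k) (xs k.+1) -> prefix_has_cover k.+1.
Proof.
move=> Hk [c Hc] Pf nB Nx Hj; exists (c (+) neg f) => s1 s2 s3 s4.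
have /norP[nB0 nB2] := nB.
rewrite nB2S (negbTE nB2) addn0 => /admissible_xor Hs.
have [F0 [P1 [P2 [P3 [P4 [T1 [T2 [R1 [R2 [HF0 [HP1 HP2 HP3 HP4] [HT1 HT2 HR1 HR2] Hold]]]]]]]]]]
  := Hc _ _ _ _ Hs.
move: (cover6_all_sub Hold); rewrite !all_cat.
move=> /and5P[_ _ _ /and5P[sP1 sP2 sP3 sP4 _] /andP[_ /and3P[sR1 sR2 _]]].
have sf : [set f] \subset parts k.+1 by rewrite Pf.
have Hf := edge_part_path Nx Hj.
have ext R : last_tadpole k R -> R \subset prefix k -> last_tadpole k.+1 (R :|: [set f]).
  by move=> HR sR; apply: last_tadpole_extend Hk nB HR sR (xypath_edge Hj Nx) sf.
exists F0, (P1 :|: [set f]), (P2 :|: [set f]), (P3 :|: [set f]), (P4 :|: [set f]),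
  T1, T2, (R1 :|: [set f]), (R2 :|: [set f]); split=> //.
- by split; apply: prefix_path_extend Hk _ _ Hf sf.
- by split; [| | exact: ext | exact: ext].
rewrite B0listS (negbTE nB0) cats0 prefixS Pf.
have Df : [disjoint prefix k & [set f]] by rewrite -Pf disjoint_prefix_part.
apply: (cover6U Df Hold (cover6_nseq _)) => e.
by rewrite !mult_cat !mult_cons2 !(mult_setU1 _ Df) // -!plusE; ring.
Qed.

Lemma prefix_has_cover_loop k l : k < n -> prefix_has_cover k ->
  parts k.+1 = [set l] -> xs k.+1 = xs k -> e1 l = xs k -> e2 l = xs k -> neg l ->
  prefix_has_cover k.+1.
Proof.
move=> Hk [c Hc] Pl Ex H1 H2 Nl; exists c => s1 s2 s3 s4.
have B0 : isB0 xs k.+1 by rewrite /isB0 /= Ex eqxx.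
have nB2 : isB2 k.+1 = false by rewrite /isB2 /= Ex eqxx.
rewrite nB2S nB2 addn0 => Hs.
have [F0 [P1 [P2 [P3 [P4 [T1 [T2 [R1 [R2 [HF0 [HP1 HP2 HP3 HP4] [HT1 HT2 HR1 HR2] Hold]]]]]]]]]]
  := Hc _ _ _ _ Hs.
move: (cover6_all_sub Hold); rewrite !all_cat => /and5P[_ _ _ _ /andP[_ /and3P[sR1 sR2 _]]].
have Tl x : x = xs k -> tadpole x [set l] [set l].
  by move=> ->; rewrite -H1; apply: loop_tadpole; rewrite ?H1.
have sl : [set l] \subset parts k.+1 by rewrite Pl.
have bar R : last_tadpole k R -> R \subset prefix k -> signed_circuit (R :|: [set l]).
  by move=> HR sR; exact: barbell_new Hk HR sR (Tl _ erefl) sl.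
have Rl : last_tadpole k.+1 [set l].
  by apply: last_tadpole_new (Tl _ Ex) sl; rewrite /isB02 B0.
have PE s P : prefix_path k s P -> prefix_path k.+1 s P.
  by case=> [[W HP] SP]; split=> //; exists W; rewrite Ex.
exists (F0 ++ [:: R1 :|: [set l]; R2 :|: [set l]]), P1, P2, P3, P4, T1, T2, [set l], [set l].
split=> //.
- by move=> F; rewrite mem_cat => /orP[/HF0 // | ]; rewrite !inE => /orP[] /eqP->; apply: bar.
- by split; apply: PE.
rewrite B0listS B0 prefixS Pl.
have Dl : [disjoint prefix k & [set l]] by rewrite -Pl disjoint_prefix_part.
apply: (cover6U Dl Hold (cover6_nseq _)) => e.
by rewrite !mult_cat !mult_cons2 !(mult_setU1 _ Dl) // -!plusE; ring.
Qed.

Lemma prefix_has_cover_B2 k : k < n -> prefix_has_cover k -> isB2 k.+1 ->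
  prefix_has_cover k.+1.
Proof.
move=> Hk [c Hc] B2; exists c => s1 s2 s3 s4.
have nB0 : isB0 xs k.+1 = false by move: B2; rewrite /isB2 /isB0 => /andP[/negbTE].
rewrite nB2S B2 addn1 => /admissible_split[p1 [p2 [p3 [p4 /andP[Hp Hs]]]]].
have [F0 [P1 [P2 [P3 [P4 [T1 [T2 [R1 [R2 [HF0 [HP1 HP2 HP3 HP4] [HT1 HT2 HR1 HR2] Hold]]]]]]]]]]
  := Hc _ _ _ _ Hs.
have [Q1 [Q2 [Q3 [Q4 [l1 [l2 [r1 [r2 [Cs [[HQ1 HQ2 HQ3 HQ4] [[C1 Hl1] [C2 Hl2] Hr1 Hr2] HCs Hnew]]]]]]]]]]
  := B2_part_data Hk B2 Hp.
move: (cover6_all_sub Hold); rewrite !all_cat.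
move=> /and5P[_ _ _ /and5P[sP1 sP2 sP3 sP4 _] /andP[_ /and3P[sR1 sR2 _]]].
move: (cover6_all_sub Hnew); rewrite !all_cat.
move=> /and4P[/and5P[sQ1 sQ2 sQ3 sQ4 _] /and3P[sl1 sl2 _] _ _].
have D := disjoint_prefix_part Hk.
exists (F0 ++ Cs ++ [:: R1 :|: l1; R2 :|: l2]), (P1 :|: Q1), (P2 :|: Q2), (P3 :|: Q3),
  (P4 :|: Q4), T1, T2, r1, r2; split=> //.
- move=> F; rewrite !mem_cat => /or3P[/HF0 // | /HCs // | ].
  by rewrite !inE => /orP[] /eqP->; [exact: barbell_new Hk HR1 sR1 Hl1 sl1
                                    | exact: barbell_new Hk HR2 sR2 Hl2 sl2].
- split; [exact: prefix_path_extend Hk HP1 sP1 HQ1 sQ1 | exact: prefix_path_extend Hk HP2 sP2 HQ2 sQ2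
         | exact: prefix_path_extend Hk HP3 sP3 HQ3 sQ3 | exact: prefix_path_extend Hk HP4 sP4 HQ4 sQ4].
rewrite B0listS nB0 cats0 prefixS.
apply: (cover6U D Hold Hnew) => e.
by rewrite !mult_cat !mult_cons2 !(mult_setU1 _ D) // -!plusE; ring.
Qed.

Lemma prefix_stage_step k : k < n -> prefix_is_path k \/ prefix_has_cover k ->
  prefix_is_path k.+1 \/ prefix_has_cover k.+1.
Proof.
move=> Hk [HA | HB];
  case: (part_cases Hk) => [[l Pl [Ex H1 H2 Nl]] | [f Pf [nB Nx Hj]] | B2].
- by right; exact: prefix_is_path_loop Hk HA Pl Ex H1 H2 Nl.
- by left; exact: prefix_is_path_edge Hk HA Pf nB Nx Hj.
- by right; exact: prefix_is_path_B2 Hk HA B2.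
- by right; exact: prefix_has_cover_loop Hk HB Pl Ex H1 H2 Nl.
- by right; exact: prefix_has_cover_edge Hk HB Pf nB Nx Hj.
- by right; exact: prefix_has_cover_B2 Hk HB B2.
Qed.

Lemma prefix_stage k : k <= n -> prefix_is_path k \/ prefix_has_cover k.
Proof.
elim: k => [_ | k IH Hk]; last exact: prefix_stage_step Hk (IH (ltnW Hk)).
by left; split=> [[] | ] //; exists [set xs 0]; rewrite prefix0; exact: xypath_nil.
Qed.

End SeriesConnection.

Theorem mainTheorem2 (V E : finType) (e1 e2 : E -> V) (neg : E -> bool)
  (n : nat) (xs : nat -> V) (parts : nat -> {set E})
  (Hdec : series_decomp e1 e2 neg n xs parts)
  (Hmax : forall (m : nat) (xs' : nat -> V) (ps' : nat -> {set E}),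
      series_decomp e1 e2 neg m xs' ps' -> xs' 0 = xs 0 -> xs' m = xs n ->
      m <= n)
  (HB2 : 1 <= count (isB2 xs parts) (iota 1 n))
  (theta : bool)
  (Htheta : count (isB2 xs parts) (iota 1 n) = 1 -> theta = false)
  (Hpsi : forall i, 0 < i <= n -> isB2 xs parts i ->
      has_psi_cover e1 e2 neg (parts i) (xs i.-1) (xs i) 2) :
  exists (F0 : seq {set E}) (P1 P2 P3 P4 T1 T2 T3 T4 : {set E}),
    (forall F, F \in F0 -> signed_circuit e1 e2 neg F) /\
    [/\ 
        forall P, P \in [:: P1; P2; P3; P4] ->
          exists W, xypath e1 e2 (xs 0) (xs n) W P,
        [/\ sgn neg P1 = theta, sgn neg P2 = theta, sgn neg P3 & sgn neg P4],
        forall T, T \in [:: T1; T2] ->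
          exists i C, [/\ first_B02 xs parts n i,
                          tadpole e1 e2 neg (xs 0) T C & C \subset parts i],
        forall T, T \in [:: T3; T4] ->
          exists i C, [/\ last_B02 xs parts n i,
                          tadpole e1 e2 neg (xs n) T C & C \subset parts i]
      & forall e : E,
          count (fun F : {set E} => e \in F)
            (F0 ++ B0list xs parts n ++ B0list xs parts n
                ++ [:: P1; P2; P3; P4; T1; T2; T3; T4]) = 6].
Proof.
have [[noB _] | [c Hc]] := prefix_stage Hdec Hpsi (leqnn n).
  move: HB2; rewrite -has_count => /hasP[j]; rewrite mem_iota add1n ltnS => Hj Bj.
  by have := noB j Hj; rewrite /isB02 Bj orbT.
have [F0 [P1 [P2 [P3 [P4 [T1 [T2 [R1 [R2 [HF0 [HP1 HP2 HP3 HP4] [HT1 HT2 HR1 HR2] Hcov]]]]]]]]]]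
  := Hc _ _ _ _ (admissible_final c HB2 Htheta).
exists F0, P1, P2, P3, P4, T1, T2, R1, R2; split=> //; split.
- by move=> P; rewrite !inE => /or4P[] /eqP->; [case: HP1 | case: HP2 | case: HP3 | case: HP4].
- by split; [case: HP1 | case: HP2 | case: HP3 | case: HP4].
- by move=> T; rewrite !inE => /orP[] /eqP->.
- by move=> T; rewrite !inE => /orP[] /eqP->.
by move=> e; have := Hcov e; rewrite (prefix_n Hdec) in_setT muln1.
Qed.
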